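(* Let $\mathcal C$ be an abelian category and let $\mathcal S,\mathcal T$ be subcategories of $\mathcal C$ containing the zero object. Then: (a) $(\mathcal S\mathcal T)_{\rm sub}\subseteq(\mathcal S)_{\rm sub}(\mathcal T)_{\rm sub}$; (b) $(\mathcal S\mathcal T)_{\rm quot}\subseteq(\mathcal S)_{\rm quot}(\mathcal T)_{\rm quot}$; (c) the conditions (i) $(\mathcal S\mathcal T)_{\rm ext}\subseteq(\mathcal S)_{\rm ext}(\mathcal T)_{\rm ext}$ and (ii) $(\mathcal T\mathcal S)_{\rm ext}\subseteq(\mathcal S)_{\rm ext}(\mathcal T)_{\rm ext}$ are equivalent; and if $\mathcal T$ is closed under extensions, they are also equivalent to (iii) $\mathcal T\mathcal S\subseteq(\mathcal S)_{\rm ext}\mathcal T$.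
   Context: For subcategories $\mathcal X,\mathcal Y$ of $\mathcal C$, $\mathcal X\mathcal Y$ is the class of objects $M$ admitting a short exact sequence $0\to L\to M\to N\to 0$ with $L\in\mathcal X$, $N\in\mathcal Y$. $(\mathcal X)_{\rm sub}$ (resp. $(\mathcal X)_{\rm quot}$) is the smallest subcategory containing $\mathcal X$ closed under subobjects (resp. quotient objects), i.e. all subobjects (resp. quotients) of objects of $\mathcal X$. $\mathcal X^0=\{0\}$, $\mathcal X^n=\mathcal X^{n-1}\mathcal X$, and $(\mathcal X)_{\rm ext}=\bigcup_{n\geq0}\mathcal X^n$, the smallest subcategory containing $\mathcal X$ closed under extensions; $\mathcal X$ is closed under extensions if $\mathcal X\mathcal X=\mathcal X$. *)

Set Implicit Arguments.
Set Universe Polymorphism.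

Record Category := {
  Obj :> Type;
  Hom : Obj -> Obj -> Type;
  idm : forall A, Hom A A;
  comp : forall A B C, Hom B C -> Hom A B -> Hom A C;
  comp_assoc : forall A B C D (h : Hom C D) (g : Hom B C) (f : Hom A B),
      comp h (comp g f) = comp (comp h g) f;
  comp_id_l : forall A B (f : Hom A B), comp (idm B) f = f;
  comp_id_r : forall A B (f : Hom A B), comp f (idm A) = f
}.

Arguments Hom {c} _ _.
Arguments idm {c} _.
Arguments comp {c A B C} _ _.

Section Defs.
Variable C : Category.

Definition mono {A B : C} (f : Hom A B) : Prop :=
  forall X (g h : Hom X A), comp f g = comp f h -> g = h.

Definition epi {A B : C} (f : Hom A B) : Prop :=
  forall X (g h : Hom B X), comp g f = comp h f -> g = h.

Definition is_zero (Z : C) : Prop :=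
  forall A : C, (exists f : Hom Z A, forall g, g = f) /\
                (exists f : Hom A Z, forall g, g = f).

Definition zero_mor {A B : C} (f : Hom A B) : Prop :=
  exists Z (u : Hom A Z) (v : Hom Z B), is_zero Z /\ f = comp v u.

Definition is_kernel {K A B : C} (k : Hom K A) (g : Hom A B) : Prop :=
  zero_mor (comp g k) /\
  forall X (h : Hom X A), zero_mor (comp g h) ->
    exists u : Hom X K, comp k u = h /\ forall u', comp k u' = h -> u' = u.

Definition is_cokernel {A B Q : C} (c : Hom B Q) (f : Hom A B) : Prop :=
  zero_mor (comp c f) /\
  forall X (h : Hom B X), zero_mor (comp h f) ->
    exists u : Hom Q X, comp u c = h /\ forall u', comp u' c = h -> u' = u.

Definition is_product (A B P : C) (p1 : Hom P A) (p2 : Hom P B) : Prop :=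
  forall X (f : Hom X A) (g : Hom X B),
    exists u : Hom X P, (comp p1 u = f /\ comp p2 u = g) /\
      forall u', comp p1 u' = f /\ comp p2 u' = g -> u' = u.

Definition is_coproduct (A B P : C) (i1 : Hom A P) (i2 : Hom B P) : Prop :=
  forall X (f : Hom A X) (g : Hom B X),
    exists u : Hom P X, (comp u i1 = f /\ comp u i2 = g) /\
      forall u', comp u' i1 = f /\ comp u' i2 = g -> u' = u.

Definition abelian : Prop :=
  (exists Z : C, is_zero Z) /\
  (forall A B : C, exists P (p1 : Hom P A) (p2 : Hom P B), is_product A B P p1 p2) /\
  (forall A B : C, exists P (i1 : Hom A P) (i2 : Hom B P), is_coproduct A B P i1 i2) /\
  (forall A B (f : Hom A B), exists K (k : Hom K A), is_kernel k f) /\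
  (forall A B (f : Hom A B), exists Q (c : Hom B Q), is_cokernel c f) /\
  (forall A B (f : Hom A B), mono f -> exists Q (g : Hom B Q), is_kernel f g) /\
  (forall A B (f : Hom A B), epi f -> exists K (g : Hom K A), is_cokernel f g).

Definition ses {L M N : C} (f : Hom L M) (g : Hom M N) : Prop :=
  mono f /\ epi g /\ is_kernel f g.

(* "subcategories" = classes of objects *)
Definition cls := C -> Prop.

Definition incl (X Y : cls) : Prop := forall M, X M -> Y M.

Definition prodcl (X Y : cls) : cls := fun M =>
  exists L N (f : Hom L M) (g : Hom M N), X L /\ Y N /\ ses f g.

Definition subcl (X : cls) : cls := fun M =>
  exists E (m : Hom M E), mono m /\ X E.

Definition quotcl (X : cls) : cls := fun M =>
  exists E (e : Hom E M), epi e /\ X E.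

Fixpoint powcl (X : cls) (n : nat) : cls :=
  match n with
  | O => is_zero
  | S n' => prodcl (powcl X n') X
  end.

Definition extcl (X : cls) : cls := fun M => exists n, powcl X n M.

Definition ext_closed (X : cls) : Prop := forall M, prodcl X X M <-> X M.

End Defs.


(* Part (a) is the usual restriction of a short exact sequence 0 -> L -> E -> N -> 0 to a
   subobject M of E: the kernel of M -> N is a subobject of L and the image of M -> N is a
   subobject of N; part (b) is its dual.  For part (c), products of classes are associative
   (a 3x3-lemma argument), so (X)_ext is the extension closure of X and
   (ST)_ext = (TS)_ext, which gives (i) <-> (ii).  When T is closed under extensions,
   (iii) makes (S)_ext T stable under right multiplication by ST, hence it contains
   (ST)_ext; conversely TS lies in (TS)_ext = (ST)_ext. *)

Section ZeroMorphisms.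
Context {C : Category}.

Lemma zero_mor_unique {A B : C} (f g : Hom A B) :
  zero_mor C f -> zero_mor C g -> f = g.
Proof.
  intros [Z [u [v [HZ ->]]]] [Z' [u' [v' [HZ' ->]]]].
  destruct (HZ Z') as [[w _] _].
  destruct (HZ' A) as [_ [a Ha]].
  destruct (HZ B) as [[b Hb] _].
  rewrite (Ha u'), <- (Ha (comp w u)), (Hb v), <- (Hb (comp v' w)).
  now rewrite comp_assoc.
Qed.

Lemma zero_mor_compl {A B D : C} (f : Hom A B) (h : Hom B D) :
  zero_mor C f -> zero_mor C (comp h f).
Proof.
  intros [Z [u [v [HZ ->]]]]. exists Z, u, (comp h v).
  split; [exact HZ | apply comp_assoc].
Qed.

Lemma zero_mor_compr {D A B : C} (f : Hom A B) (h : Hom D A) :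
  zero_mor C f -> zero_mor C (comp f h).
Proof.
  intros [Z [u [v [HZ ->]]]]. exists Z, (comp u h), v.
  split; [exact HZ | symmetry; apply comp_assoc].
Qed.

Lemma zero_mor_from_zero {Z B : C} (f : Hom Z B) : is_zero C Z -> zero_mor C f.
Proof.
  intros HZ. exists Z, (idm Z), f.
  split; [exact HZ | symmetry; apply comp_id_r].
Qed.

Lemma zero_mor_to_zero {A Z : C} (f : Hom A Z) : is_zero C Z -> zero_mor C f.
Proof.
  intros HZ. exists Z, f, (idm Z).
  split; [exact HZ | symmetry; apply comp_id_l].
Qed.

Section WithZeroObject.
Hypothesis HZ : exists Z, is_zero C Z.

Lemma zero_mor_exists (A B : C) : exists f : Hom A B, zero_mor C f.
Proof.
  destruct HZ as [Z HZ0].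
  destruct (HZ0 A) as [_ [u _]]. destruct (HZ0 B) as [[v _] _].
  exists (comp v u), Z, u, v. split; [exact HZ0 | reflexivity].
Qed.

Lemma zero_mor_cancel_mono {A B D : C} {m : Hom B D} {h : Hom A B} :
  mono C m -> zero_mor C (comp m h) -> zero_mor C h.
Proof.
  intros Hm Hmh. destruct (zero_mor_exists A B) as [h0 H0].
  replace h with h0; [exact H0 |].
  apply Hm, zero_mor_unique; [apply zero_mor_compl, H0 | exact Hmh].
Qed.

End WithZeroObject.
End ZeroMorphisms.

Section MonoEpi.
Context {C : Category}.

Lemma mono_comp {A B D : C} {f : Hom B D} {g : Hom A B} :
  mono C f -> mono C g -> mono C (comp f g).
Proof. intros Hf Hg X x y Hxy. apply Hg, Hf. now rewrite !comp_assoc. Qed.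

Lemma epi_comp {A B D : C} {f : Hom B D} {g : Hom A B} :
  epi C f -> epi C g -> epi C (comp f g).
Proof. intros Hf Hg X x y Hxy. apply Hf, Hg. now rewrite <- !comp_assoc. Qed.

Lemma mono_of_comp {A B D : C} (f : Hom B D) {g : Hom A B} :
  mono C (comp f g) -> mono C g.
Proof. intros H X x y Hxy. apply H. now rewrite <- !comp_assoc, Hxy. Qed.

Lemma epi_of_comp {A B D : C} {f : Hom B D} (g : Hom A B) :
  epi C (comp f g) -> epi C f.
Proof. intros H X x y Hxy. apply H. now rewrite !comp_assoc, Hxy. Qed.

Lemma split_mono {A B : C} {m : Hom A B} {p : Hom B A} :
  comp p m = idm A -> mono C m.
Proof.
  intros H. apply (mono_of_comp p). rewrite H.
  intros X x y Hxy. now rewrite !comp_id_l in Hxy.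
Qed.

Lemma split_epi {A B : C} {e : Hom A B} {s : Hom B A} :
  comp e s = idm B -> epi C e.
Proof.
  intros H. apply (epi_of_comp s). rewrite H.
  intros X x y Hxy. now rewrite !comp_id_r in Hxy.
Qed.

Lemma kernel_mono {K A B : C} {k : Hom K A} {g : Hom A B} :
  is_kernel C k g -> mono C k.
Proof.
  intros [Hgk Huniv] X x y Hxy.
  assert (Hz : zero_mor C (comp g (comp k x)))
    by (rewrite comp_assoc; apply zero_mor_compr, Hgk).
  destruct (Huniv X _ Hz) as [u [_ Hu]].
  now rewrite (Hu x eq_refl), (Hu y (eq_sym Hxy)).
Qed.

Lemma kernel_factor {K A B X : C} {k : Hom K A} {g : Hom A B} {h : Hom X A} :
  is_kernel C k g -> zero_mor C (comp g h) -> exists u, comp k u = h.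
Proof. intros [_ Huniv] Hgh. destruct (Huniv X h Hgh) as [u [Hu _]]. now exists u. Qed.

Lemma cokernel_factor {A B Q X : C} {c : Hom B Q} {f : Hom A B} {h : Hom B X} :
  is_cokernel C c f -> zero_mor C (comp h f) -> exists u, comp u c = h.
Proof. intros [_ Huniv] Hhf. destruct (Huniv X h Hhf) as [u [Hu _]]. now exists u. Qed.

Lemma kernel_restrict {K A B M : C} {f : Hom K A} {g : Hom A B} {k : Hom M A}
    {f' : Hom K M} :
  mono C k -> comp k f' = f -> is_kernel C f g -> is_kernel C f' (comp g k).
Proof.
  intros Hk Ef [Hgf Huniv]. split.
  - now rewrite <- comp_assoc, Ef.
  - intros X h Hh. rewrite <- comp_assoc in Hh.
    destruct (Huniv X _ Hh) as [u [Hu Huniq]].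
    exists u. split.
    + apply Hk. now rewrite comp_assoc, Ef.
    + intros u' Hu'. apply Huniq. now rewrite <- Ef, <- comp_assoc, Hu'.
Qed.

Lemma kernel_of_comp_mono (HZ : exists Z, is_zero C Z) {K A I B : C} {k : Hom K A}
    {e : Hom A I} {i : Hom I B} :
  mono C i -> is_kernel C k (comp i e) -> is_kernel C k e.
Proof.
  intros Hi [Hz Huniv]. split.
  - apply (zero_mor_cancel_mono HZ Hi). now rewrite comp_assoc.
  - intros X h Hh. apply Huniv. rewrite <- comp_assoc. now apply zero_mor_compl.
Qed.

End MonoEpi.

Definition opposite (C : Category) : Category := {|
  Obj := Obj C;
  Hom := fun A B => @Hom C B A;
  idm := fun A => @idm C A;
  comp := fun A B D (g : @Hom C D B) (f : @Hom C B A) => @comp C D B A f g;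
  comp_assoc := fun A B D E h g f => eq_sym (@comp_assoc C E D B A f g h);
  comp_id_l := fun A B f => @comp_id_r C B A f;
  comp_id_r := fun A B f => @comp_id_l C B A f |}.

Section Opposite.
Context {C : Category}.

Lemma is_zero_op (Z : C) : is_zero (opposite C) Z <-> is_zero C Z.
Proof. split; intros H A; destruct (H A); now split. Qed.

Lemma zero_mor_op {A B : C} (f : @Hom C A B) :
  @zero_mor (opposite C) B A f <-> zero_mor C f.
Proof.
  split; intros [Z [u [v [HZ Ef]]]]; exists Z, v, u;
    split; trivial; now apply is_zero_op.
Qed.

Lemma is_kernel_op {K A B : C} (k : @Hom C A K) (g : @Hom C B A) :
  @is_kernel (opposite C) K A B k g <-> is_cokernel C k g.
Proof.
  split; intros [Hz Huniv]; split;
    try (intros X h Hh; apply Huniv); now apply zero_mor_op.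
Qed.

Lemma is_cokernel_op {A B Q : C} (c : @Hom C Q B) (f : @Hom C B A) :
  @is_cokernel (opposite C) A B Q c f <-> is_kernel C c f.
Proof.
  split; intros [Hz Huniv]; split;
    try (intros X h Hh; apply Huniv); now apply zero_mor_op.
Qed.

Lemma abelian_op : abelian C -> abelian (opposite C).
Proof.
  intros [[Z HZ] [Hprod [Hcoprod [Hker [Hcoker [Hmono Hepi]]]]]].
  repeat split.
  - exists Z. now apply is_zero_op.
  - exact Hcoprod.
  - exact Hprod.
  - intros A B f. destruct (Hcoker B A f) as [Q [c Hc]].
    exists Q, c. now apply is_kernel_op.
  - intros A B f. destruct (Hker B A f) as [K [k Hk]].
    exists K, k. now apply is_cokernel_op.
  - intros A B f Hf. destruct (Hepi B A f Hf) as [K [g Hg]].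
    exists K, g. now apply is_kernel_op.
  - intros A B f Hf. destruct (Hmono B A f Hf) as [Q [g Hg]].
    exists Q, g. now apply is_cokernel_op.
Qed.

End Opposite.

Section AbelianAxioms.
Context {C : Category}.
Hypothesis HC : abelian C.

Lemma abelian_zero : exists Z, is_zero C Z.
Proof. now destruct HC. Qed.

Lemma abelian_products (A B : C) :
  exists P (p1 : Hom P A) (p2 : Hom P B), is_product C A B P p1 p2.
Proof. destruct HC as (_ & H & _). apply H. Qed.

Lemma abelian_kernels {A B : C} (f : Hom A B) : exists K (k : Hom K A), is_kernel C k f.
Proof. destruct HC as (_ & _ & _ & H & _). apply H. Qed.

Lemma abelian_cokernels {A B : C} (f : Hom A B) : exists Q (c : Hom B Q), is_cokernel C c f.
Proof. destruct HC as (_ & _ & _ & _ & H & _). apply H. Qed.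

Lemma abelian_mono_kernel {A B : C} {f : Hom A B} :
  mono C f -> exists Q (g : Hom B Q), is_kernel C f g.
Proof. destruct HC as (_ & _ & _ & _ & _ & H & _). apply H. Qed.

Lemma mono_kernel_of_cokernel {A B Q : C} {m : Hom A B} {c : Hom B Q} :
  mono C m -> is_cokernel C c m -> is_kernel C m c.
Proof.
  intros Hm Hc.
  destruct (abelian_mono_kernel Hm) as [D [t Ht]].
  destruct (cokernel_factor Hc (proj1 Ht)) as [t' Et].
  split; [apply Hc |].
  intros X h Hh. apply Ht.
  rewrite <- Et, <- comp_assoc. now apply zero_mor_compl.
Qed.

End AbelianAxioms.

Lemma epi_cokernel_of_kernel {C : Category} (HC : abelian C) {K A B : C} {e : Hom A B}
    {k : Hom K A} :
  epi C e -> is_kernel C k e -> is_cokernel C e k.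
Proof.
  intros He Hk. apply is_kernel_op.
  apply (@mono_kernel_of_cokernel (opposite C) (abelian_op HC)); [exact He |].
  now apply is_cokernel_op.
Qed.

Lemma ses_op {C : Category} (HC : abelian C) {L M N : C} (f : @Hom C M L)
    (g : @Hom C N M) :
  @ses (opposite C) L M N f g <-> ses C g f.
Proof.
  split.
  - intros [Hf [Hg Hk]]. split; [exact Hg | split; [exact Hf |]].
    apply mono_kernel_of_cokernel; trivial. now apply is_kernel_op.
  - intros [Hg [Hf Hk]]. split; [exact Hf | split; [exact Hg |]].
    apply is_kernel_op. now apply epi_cokernel_of_kernel.
Qed.

Lemma prodcl_op {C : Category} (HC : abelian C) (X Y : cls C) (M : C) :
  @prodcl (opposite C) X Y M <-> prodcl Y X M.
Proof.
  split; intros [L [N [f [g [HX [HY Hs]]]]]]; exists N, L, g, f;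
    (split; [exact HY | split; [exact HX | now apply (ses_op HC)]]).
Qed.

Section ClassInclusions.
Context {C : Category}.

Lemma incl_refl (X : cls C) : incl X X.
Proof. intros M HM. exact HM. Qed.

Lemma prodcl_incl {X X' Y Y' : cls C} :
  incl X X' -> incl Y Y' -> incl (prodcl X Y) (prodcl X' Y').
Proof.
  intros HX HY M [L [N [f [g [HL [HN Hs]]]]]].
  exists L, N, f, g. auto.
Qed.

End ClassInclusions.

Section Factorization.
Context {C : Category}.
Hypothesis HC : abelian C.

Lemma abelian_equalizer {B X : C} (x y : Hom B X) :
  exists E (k : Hom E B), mono C k /\ comp x k = comp y k /\
    forall A (h : Hom A B), comp x h = comp y h -> exists u, comp k u = h.
Proof.
  destruct (abelian_products HC B X) as [P [p1 [p2 HP]]].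
  destruct (HP B (idm B) x) as [mx [[Hmx1 Hmx2] _]].
  destruct (HP B (idm B) y) as [my [[Hmy1 Hmy2] _]].
  destruct (abelian_cokernels HC mx) as [Q [c Hc]].
  assert (Hmx : is_kernel C mx c)
    by (apply (mono_kernel_of_cokernel HC); [exact (split_mono Hmx1) | exact Hc]).
  destruct (abelian_kernels HC (comp c my)) as [E [k Hk]].
  assert (graph_eq : forall A (h : Hom A B), comp x h = comp y h -> comp my h = comp mx h).
  { intros A h Hh. destruct (HP A h (comp x h)) as [u [_ Hu]].
    assert (Ex : comp mx h = u)
      by (apply Hu; rewrite !comp_assoc, Hmx1, Hmx2, comp_id_l; now split).
    assert (Ey : comp my h = u)
      by (apply Hu; rewrite !comp_assoc, Hmy1, Hmy2, comp_id_l, Hh; now split).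
    congruence. }
  assert (Hz : zero_mor C (comp c (comp my k))) by (rewrite comp_assoc; apply Hk).
  destruct (kernel_factor Hmx Hz) as [j Hj].
  assert (Ejk : j = k).
  { rewrite <- (comp_id_l _ _ _ j), <- Hmx1, <- comp_assoc, Hj, comp_assoc, Hmy1.
    apply comp_id_l. }
  subst j.
  exists E, k. split; [exact (kernel_mono Hk) |]. split.
  - rewrite <- Hmx2, <- Hmy2, <- !comp_assoc. now rewrite Hj.
  - intros A h Hh. apply (kernel_factor Hk).
    rewrite <- comp_assoc, (graph_eq A h Hh), comp_assoc.
    apply zero_mor_compr, Hmx.
Qed.

Lemma epi_of_factors_split {A B : C} (v : Hom A B) :
  (forall J (j : Hom J B) (w : Hom A J), mono C j -> comp j w = v ->
     exists s : Hom B J, comp j s = idm B) -> epi C v.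
Proof.
  intros Hsplit X x y Hxy.
  destruct (abelian_equalizer x y) as [E [k [Hk [Exy Huniv]]]].
  destruct (Huniv A v Hxy) as [w Hw].
  destruct (Hsplit E k w Hk Hw) as [s Hs].
  rewrite <- (comp_id_r _ _ _ x), <- (comp_id_r _ _ _ y), <- Hs, !comp_assoc.
  now rewrite Exy.
Qed.

Lemma epi_of_mono_comp {I A B : C} (i : Hom I B) {e : Hom A I} :
  mono C i ->
  (forall D (d : Hom B D), zero_mor C (comp d (comp i e)) -> zero_mor C (comp d i)) ->
  epi C e.
Proof.
  intros Hi Hcoker. apply epi_of_factors_split.
  intros J j w Hj Hw.
  destruct (abelian_mono_kernel HC (mono_comp Hi Hj)) as [D [d Hd]].
  assert (Hdi : zero_mor C (comp d i)).
  { apply Hcoker. rewrite <- Hw, (comp_assoc _ _ _ _ _ i j w), comp_assoc.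
    apply zero_mor_compr, Hd. }
  destruct (kernel_factor Hd Hdi) as [s Hs].
  exists s. apply Hi. now rewrite comp_assoc, Hs, comp_id_r.
Qed.

Lemma image_factorization {A B : C} (h : Hom A B) :
  exists I (i : Hom I B) (e : Hom A I), mono C i /\ epi C e /\ comp i e = h.
Proof.
  destruct (abelian_cokernels HC h) as [Q [c Hc]].
  destruct (abelian_kernels HC c) as [I [i Hi]].
  destruct (kernel_factor Hi (proj1 Hc)) as [e He].
  exists I, i, e. split; [exact (kernel_mono Hi) |]. split; [| exact He].
  apply epi_of_mono_comp with (i := i); [exact (kernel_mono Hi) |].
  intros D d Hd. rewrite He in Hd.
  destruct (cokernel_factor Hc Hd) as [d' Hd'].
  rewrite <- Hd', <- comp_assoc. apply zero_mor_compl, Hi.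
Qed.

Lemma subcl_prodcl (S T : cls C) :
  incl (subcl (prodcl S T)) (prodcl (subcl S) (subcl T)).
Proof.
  intros M [E [m [Hm [L [N [f [g [HL [HN [Hf [Hg Hk]]]]]]]]]]].
  destruct (abelian_kernels HC (comp g m)) as [K [k Hk']].
  destruct (image_factorization (comp g m)) as [I [i [e [Hi [He Hie]]]]].
  assert (Hz : zero_mor C (comp g (comp m k))) by (rewrite comp_assoc; apply Hk').
  destruct (kernel_factor Hk Hz) as [u Hu].
  exists K, I, k, e. split; [| split].
  - exists L, u. split; [| exact HL].
    apply (mono_of_comp f). rewrite Hu.
    exact (mono_comp Hm (kernel_mono Hk')).
  - exists N, i. now split.
  - split; [exact (kernel_mono Hk') |]. split; [exact He |].
    apply (kernel_of_comp_mono (abelian_zero HC) Hi). now rewrite Hie.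
Qed.

(* M' = ker (M -> N -> N2) is the preimage of L2 under M -> N, and M' / L = L2. *)
Lemma prodcl_assoc_l (X Y W : cls C) :
  incl (prodcl X (prodcl Y W)) (prodcl (prodcl X Y) W).
Proof.
  intros M [L [N [f [g [HL [[L2 [N2 [f2 [g2 [HL2 [HN2 [Hf2 [Hg2 Hk2]]]]]]]] [Hf [Hg Hk]]]]]]]].
  destruct (abelian_kernels HC (comp g2 g)) as [M' [k Hk']].
  pose proof (epi_comp Hg2 Hg) as He.
  pose proof (epi_cokernel_of_kernel HC He Hk') as Hcoker.
  assert (Hgf : zero_mor C (comp (comp g2 g) f))
    by (rewrite <- comp_assoc; apply zero_mor_compl, Hk).
  destruct (kernel_factor Hk' Hgf) as [f' Ef'].
  assert (Hgk : zero_mor C (comp g2 (comp g k))) by (rewrite comp_assoc; apply Hk').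
  destruct (kernel_factor Hk2 Hgk) as [v Ev].
  assert (Hv : epi C v).
  { apply epi_of_mono_comp with (i := f2); [exact Hf2 |].
    intros D d Hd. rewrite Ev, comp_assoc in Hd.
    destruct (cokernel_factor Hcoker Hd) as [t Ht].
    assert (Etd : comp t g2 = d) by (apply Hg; rewrite <- Ht; symmetry; apply comp_assoc).
    rewrite <- Etd, <- comp_assoc. apply zero_mor_compl, Hk2. }
  assert (Hf' : is_kernel C f' v).
  { apply (kernel_of_comp_mono (abelian_zero HC) Hf2). rewrite Ev.
    exact (kernel_restrict (kernel_mono Hk') Ef' Hk). }
  exists M', N2, k, (comp g2 g). split; [| split; [exact HN2 |]].
  - exists L, L2, f', v. split; [exact HL | split; [exact HL2 |]].
    split; [exact (kernel_mono Hf') | split; [exact Hv | exact Hf']].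
  - split; [exact (kernel_mono Hk') | split; [exact He | exact Hk']].
Qed.

End Factorization.

Lemma quotcl_prodcl {C : Category} (HC : abelian C) (S T : cls C) :
  incl (quotcl (prodcl S T)) (prodcl (quotcl S) (quotcl T)).
Proof.
  intros M [E [e [He HE]]].
  apply (prodcl_op HC), (subcl_prodcl (abelian_op HC)).
  exists E, e. split; [exact He |]. now apply (prodcl_op HC).
Qed.

Lemma prodcl_assoc_r {C : Category} (HC : abelian C) (X Y W : cls C) :
  incl (prodcl (prodcl X Y) W) (prodcl X (prodcl Y W)).
Proof.
  intros M HM.
  apply (prodcl_incl (incl_refl X) (fun N => proj1 (prodcl_op HC W Y N))).
  apply (prodcl_op HC), (prodcl_assoc_l (abelian_op HC)), (prodcl_op HC).
  revert HM. apply prodcl_incl; [| apply incl_refl].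
  intros N HN. now apply (prodcl_op HC).
Qed.

Section ExtensionClosure.
Context {C : Category}.

Definition contains_zeros (X : cls C) : Prop := forall Z : C, is_zero C Z -> X Z.

Definition iso_closed (X : cls C) : Prop :=
  forall L M (f : Hom L M) (s : Hom M L),
    comp f s = idm M -> comp s f = idm L -> X L -> X M.

Lemma is_zero_iso_closed : iso_closed (is_zero C).
Proof.
  intros L M f s Efs Esf HL A. destruct (HL A) as [[z Hz] [z' Hz']]. split.
  - exists (comp z s). intros g.
    now rewrite <- (Hz (comp g f)), <- comp_assoc, Efs, comp_id_r.
  - exists (comp f z'). intros g.
    now rewrite <- (Hz' (comp s g)), comp_assoc, Efs, comp_id_l.
Qed.

Lemma prodcl_iso_closed (X Y : cls C) : iso_closed (prodcl X Y).
Proof.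
  intros L M f s Efs Esf [L0 [N0 [f0 [g0 [HX [HY [Hf0 [Hg0 [Hz Huniv]]]]]]]]].
  pose proof (split_mono Esf) as Hf.
  exists L0, N0, (comp f f0), (comp g0 s). repeat split; trivial.
  - exact (mono_comp Hf Hf0).
  - exact (epi_comp Hg0 (split_epi Esf)).
  - now rewrite <- comp_assoc, (comp_assoc _ _ _ _ _ s f f0), Esf, comp_id_l.
  - intros W h Hh. rewrite <- comp_assoc in Hh.
    destruct (Huniv W _ Hh) as [u [Hu _]].
    assert (Eu : comp (comp f f0) u = h)
      by (now rewrite <- comp_assoc, Hu, comp_assoc, Efs, comp_id_l).
    exists u. split; [exact Eu |].
    intros u' Hu'. apply (mono_comp Hf Hf0). now rewrite Hu', Eu.
Qed.

Lemma powcl_iso_closed (X : cls C) (n : nat) : iso_closed (powcl X n).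
Proof. destruct n; [apply is_zero_iso_closed | apply prodcl_iso_closed]. Qed.

Lemma prodcl_zero_quotient {Y : cls C} : iso_closed Y -> incl (prodcl Y (is_zero C)) Y.
Proof.
  intros HY M [L [N [f [g [HL [HN [Hf [_ Hk]]]]]]]].
  destruct (kernel_factor Hk (zero_mor_to_zero (comp g (idm M)) HN)) as [s Hs].
  apply (HY L M f s Hs); [| exact HL].
  apply Hf. now rewrite comp_assoc, Hs, comp_id_l, comp_id_r.
Qed.

Lemma ses_from_zero {Z M : C} (z : Hom Z M) : is_zero C Z -> ses C z (idm M).
Proof.
  intros HZ. repeat split.
  - intros W x y _. destruct (HZ W) as [_ [t Ht]]. now rewrite (Ht x), (Ht y).
  - intros W x y Hxy. now rewrite !comp_id_r in Hxy.
  - exact (zero_mor_from_zero _ HZ).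
  - intros W h Hh. destruct (HZ W) as [_ [t Ht]]. exists t. split.
    + rewrite comp_id_l in Hh. apply zero_mor_unique; [| exact Hh].
      exists Z, t, z. now split.
    + intros u' _. apply Ht.
Qed.

Lemma ses_to_zero {M Z : C} (t : Hom M Z) : is_zero C Z -> ses C (idm M) t.
Proof.
  intros HZ. repeat split.
  - intros W x y Hxy. now rewrite !comp_id_l in Hxy.
  - intros W x y _. destruct (HZ W) as [[s Hs] _]. now rewrite (Hs x), (Hs y).
  - exact (zero_mor_to_zero _ HZ).
  - intros W h _. exists h. split; [apply comp_id_l |].
    intros u' Hu'. now rewrite comp_id_l in Hu'.
Qed.

Lemma prodcl_zero_l {X Y : cls C} :
  (exists Z, is_zero C Z) -> contains_zeros X -> incl Y (prodcl X Y).
Proof.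
  intros [Z HZ] HX M HM. destruct (HZ M) as [[z _] _].
  exists Z, M, z, (idm M). split; [now apply HX |]. split; [exact HM |].
  exact (ses_from_zero _ HZ).
Qed.

Lemma prodcl_zero_r {X Y : cls C} :
  (exists Z, is_zero C Z) -> contains_zeros Y -> incl X (prodcl X Y).
Proof.
  intros [Z HZ] HY M HM. destruct (HZ M) as [_ [t _]].
  exists M, Z, (idm M), t. split; [exact HM |]. split; [now apply HY |].
  exact (ses_to_zero _ HZ).
Qed.

Lemma extcl_contains_zeros (X : cls C) : contains_zeros (extcl X).
Proof. intros Z HZ. now exists 0. Qed.

Lemma extcl_min_r (X Y : cls C) :
  contains_zeros Y -> incl (prodcl Y X) Y -> incl (extcl X) Y.
Proof.
  intros H0 HYX M [n Hn]. revert M Hn.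
  induction n as [| n IHn]; intros M Hn; [now apply H0 |].
  apply HYX. revert Hn. apply prodcl_incl; [exact IHn | apply incl_refl].
Qed.

Lemma extcl_min (X Y : cls C) :
  contains_zeros Y -> incl (prodcl Y Y) Y -> incl X Y -> incl (extcl X) Y.
Proof.
  intros H0 HYY HXY. apply extcl_min_r; [exact H0 |].
  intros M HM. apply HYY. revert HM. apply prodcl_incl; [apply incl_refl | exact HXY].
Qed.

Hypothesis HC : abelian C.

Lemma powcl_add (X : cls C) (n m : nat) :
  incl (prodcl (powcl X n) (powcl X m)) (powcl X (n + m)).
Proof.
  revert n. induction m as [| m IHm]; intros n M HM.
  - rewrite <- plus_n_O. exact (prodcl_zero_quotient (powcl_iso_closed X n) M HM).
  - rewrite <- plus_n_Sm. apply (prodcl_assoc_l HC) in HM.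
    revert HM. apply prodcl_incl; [apply IHm | apply incl_refl].
Qed.

Lemma extcl_prodcl (X : cls C) : incl (prodcl (extcl X) (extcl X)) (extcl X).
Proof.
  intros M [L [N [f [g [[n HL] [[m HN] Hs]]]]]].
  exists (n + m). apply powcl_add. now exists L, N, f, g.
Qed.

Lemma extcl_incl (X : cls C) : incl X (extcl X).
Proof.
  intros M HM. exists 1.
  exact (prodcl_zero_l (abelian_zero HC) (fun Z HZ => HZ) M HM).
Qed.

Lemma extcl_prodcl_comm (S T : cls C) :
  contains_zeros S -> contains_zeros T ->
  incl (extcl (prodcl S T)) (extcl (prodcl T S)).
Proof.
  intros HS HT. apply extcl_min.
  - apply extcl_contains_zeros.
  - apply extcl_prodcl.
  - intros M HM. apply extcl_prodcl. revert HM. apply prodcl_incl.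
    + intros N HN. apply extcl_incl. exact (prodcl_zero_l (abelian_zero HC) HT N HN).
    + intros N HN. apply extcl_incl. exact (prodcl_zero_r (abelian_zero HC) HS N HN).
Qed.

Section ExtensionClosedT.
Context {S T : cls C}.
Hypotheses (HS : contains_zeros S) (HT : contains_zeros T).

Lemma prodcl_comm_incl_of_extcl :
  incl (extcl T) T ->
  incl (extcl (prodcl S T)) (prodcl (extcl S) (extcl T)) ->
  incl (prodcl T S) (prodcl (extcl S) T).
Proof.
  intros HextT H M HM.
  apply (prodcl_incl (incl_refl _) HextT), H, (extcl_prodcl_comm T S HT HS), extcl_incl, HM.
Qed.

Lemma extcl_prodcl_incl_of_comm :
  incl (prodcl T T) T ->
  incl (prodcl T S) (prodcl (extcl S) T) ->
  incl (extcl (prodcl S T)) (prodcl (extcl S) (extcl T)).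
Proof.
  intros HTT HTS.
  assert (Hstable : incl (prodcl (prodcl (extcl S) T) (prodcl S T)) (prodcl (extcl S) T)).
  (* With E = (S)_ext, read upwards:
     (E T)(S T) <= E (T (S T)) <= E ((T S) T) <= E ((E T) T) <= E (E (T T))
                <= E (E T) <= (E E) T <= E T. *)
  { intros M HM.
    apply (prodcl_incl (extcl_prodcl S) (incl_refl T)), (prodcl_assoc_l HC).
    apply (prodcl_incl (incl_refl _) (prodcl_incl (incl_refl _) HTT)).
    apply (prodcl_incl (incl_refl _) (prodcl_assoc_r HC _ _ _)).
    apply (prodcl_incl (incl_refl _) (prodcl_incl HTS (incl_refl T))).
    apply (prodcl_incl (incl_refl _) (prodcl_assoc_l HC _ _ _)).
    exact (prodcl_assoc_r HC _ _ _ M HM). }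
  intros M HM. apply (prodcl_incl (incl_refl _) (extcl_incl T)).
  revert M HM. apply extcl_min_r; [| exact Hstable].
  intros Z HZ. apply (prodcl_zero_l (abelian_zero HC) (extcl_contains_zeros S)), HT, HZ.
Qed.

End ExtensionClosedT.
End ExtensionClosure.

Theorem proposition2p2 (C : Category) (HC : abelian C) (S T : cls C)
  (HS : forall Z : C, is_zero C Z -> S Z) (HT : forall Z : C, is_zero C Z -> T Z) :
  incl (subcl (prodcl S T)) (prodcl (subcl S) (subcl T)) /\
  incl (quotcl (prodcl S T)) (prodcl (quotcl S) (quotcl T)) /\
  (incl (extcl (prodcl S T)) (prodcl (extcl S) (extcl T)) <->
   incl (extcl (prodcl T S)) (prodcl (extcl S) (extcl T))) /\
  (ext_closed T ->
   (incl (extcl (prodcl S T)) (prodcl (extcl S) (extcl T)) <->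
    incl (prodcl T S) (prodcl (extcl S) T))).
Proof.
  split; [exact (subcl_prodcl HC S T) |].
  split; [exact (quotcl_prodcl HC S T) |].
  split.
  - split; intros H M HM; apply H; now apply (extcl_prodcl_comm HC).
  - intros HTe.
    assert (HTT : incl (prodcl T T) T) by (intros M; apply HTe).
    pose proof (extcl_min T T HT HTT (incl_refl T)) as HextT.
    split.
    + exact (prodcl_comm_incl_of_extcl HC HS HT HextT).
    + exact (extcl_prodcl_incl_of_comm HC HT HTT).
Qed.
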